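(* Let $m\ge2$, $\theta\in(0,1]$, and let $\hat P$ be the expected normalized profile. Then Plurality elects candidate $1$ in $\hat P$; Plurality is CM (indeed unison-manipulable) in $\hat P$ if $\theta<\frac{m-2}{3m-2}$, and Plurality is not CM in any continuous profile of some neighborhood of $\hat P$ if $\theta>\frac{m-2}{3m-2}$.
   Context: A ranking is a strict total order on $\{1,\dots,m\}$. A continuous profile consists of the candidate set, a total weight $w(P)>0$ and weights $w(p,P)\ge 0$ for each ranking $p$ summing to $w(P)$; profiles are identified with weight vectors in $\mathbb R^{m!}$ (neighborhoods are taken among continuous profiles of total weight $1$ in this topology). Plurality: $s_{\mathrm{Plu}}(c,P)$ is the total weight of rankings placing $c$ first; the winner has the highest score, ties broken by an arbitrary fixed rule. CM (continuous): a rule $f$ is CM in $P$ if there is a continuous profile $Q$ with the same candidates and total weight, $f(Q)\ne f(P)$, and every ranking $p$ with $w(p,Q)<w(p,P)$ prefers $f(Q)$ to $f(P)$. UM: $f$ is unison-manipulable in $P$ if there are a candidate $c\ne f(P)$ and a ranking $q$ such that moving all weight of the rankings preferring $c$ to $f(P)$ onto $q$ yields a profile where $c$ wins. Expected normalized profile $\hat P$ (for parameters $m$, $\theta$): total weight $1$, weight $\theta+\frac{1-\theta}{m!}$ on $1\succ 2\succ\cdots\succ m$ and $\frac{1-\theta}{m!}$ on each other ranking. *)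

From HB Require Import structures.
From mathcomp Require Import all_boot all_order all_algebra all_fingroup.
From mathcomp Require Import reals.
Set Implicit Arguments. Unset Strict Implicit. Unset Printing Implicit Defensive.
Import Order.TTheory GRing.Theory Num.Theory.
Local Open Scope ring_scope.

(* Candidates are 'I_m (candidate k+1 of the paper is the ordinal k).
   A ranking is a permutation p of 'I_m, read as: p c = position of
   candidate c in the ranking (position 0 = top). *)
Definition ranking (m : nat) := {perm 'I_m}.

Definition profile (R : realType) (m : nat) := {ffun {perm 'I_m} -> R}.

Definition prefers (m : nat) (p : {perm 'I_m}) (a b : 'I_m) : bool :=
  (p a < p b)%N.

Definition total_weight (R : realType) (m : nat) (P : profile R m) : R :=
  \sum_(p : {perm 'I_m}) P p.

Definition is_profile (R : realType) (m : nat) (P : profile R m) : Prop :=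
  (forall p, 0 <= P p) /\ 0 < total_weight P.

Definition plu_score (R : realType) (m : nat) (P : profile R m) (c : 'I_m) : R :=
  \sum_(p : {perm 'I_m} | nat_of_ord (p c) == 0%N) P p.

Definition plu_top (R : realType) (m : nat) (P : profile R m) : {set 'I_m} :=
  [set c | [forall d, plu_score P d <= plu_score P c]].

Definition tiebreak_ok (m : nat) (tb : {set 'I_m} -> 'I_m) : Prop :=
  forall S : {set 'I_m}, S != set0 -> tb S \in S.

Definition plurality (R : realType) (m : nat) (tb : {set 'I_m} -> 'I_m)
  (P : profile R m) : 'I_m := tb (plu_top P).

Definition CM (R : realType) (m : nat) (f : profile R m -> 'I_m)
  (P : profile R m) : Prop :=
  exists Q : profile R m,
    [/\ is_profile Q, total_weight Q = total_weight P, f Q != f P &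
        forall p, Q p < P p -> prefers p (f Q) (f P)].

Definition unison_move (R : realType) (m : nat) (P : profile R m)
  (c w : 'I_m) (q : {perm 'I_m}) : profile R m :=
  [ffun p => (if prefers p c w then 0 else P p)
             + (if p == q then \sum_(r | prefers r c w) P r else 0)].

Definition UM (R : realType) (m : nat) (f : profile R m -> 'I_m)
  (P : profile R m) : Prop :=
  exists c : 'I_m, c != f P /\
    exists q : {perm 'I_m}, f (unison_move P c (f P) q) = c.

(* expected normalized profile: weight theta + (1-theta)/m! on the identity
   ranking 1 > 2 > ... > m, and (1-theta)/m! on every other ranking *)
Definition expected_profile (R : realType) (m : nat) (theta : R) : profile R m :=
  [ffun p => (if p == 1%g then theta else 0) + (1 - theta) / (m`!)%:R].

From HB Require Import structures.
From mathcomp Require Import all_boot all_order all_algebra all_fingroup.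
From mathcomp Require Import reals ring lra.
Import Order.TTheory GRing.Theory Num.Theory.
Set Implicit Arguments. Unset Strict Implicit. Unset Printing Implicit Defensive.
Local Open Scope ring_scope.

(* In the expected profile candidate 1 has Plurality score theta + (1-theta)/m,
   every other candidate (1-theta)/m, and for c <> 1 the rankings preferring c
   to 1 carry weight (1-theta)/2.  Below the threshold (1-theta)/2 exceeds
   theta + (1-theta)/m, so these voters elect c by all ranking c first.
   Conversely, a coalitional manipulation from the winner w towards c may only
   take weight away from rankings preferring c to w; the rankings with w on top
   are not among them, so w keeps at least its score, while c's new score is at
   most the weight preferring c to w.  Hence manipulability forces
   score(w) <= weight(c over w), which fails with a margin above the threshold,
   hence also in a neighbourhood. *)

Section Rankings.
Variable m : nat.
Implicit Types (p : {perm 'I_m}) (c z : 'I_m).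

Lemma prefers_top p c z : c != z -> nat_of_ord (p c) == 0%N -> prefers p c z.
Proof.
move=> ncz /eqP pc0; rewrite /prefers pc0 lt0n; apply: contra ncz => /eqP pz0.
by apply/eqP/(@perm_inj _ p)/val_inj; rewrite /= pc0 pz0.
Qed.

Lemma not_prefers_top p c z : nat_of_ord (p z) == 0%N -> ~~ prefers p c z.
Proof. by move=> /eqP pz0; rewrite /prefers pz0 ltn0. Qed.

Lemma negb_prefers p c z : c != z -> ~~ prefers p c z = prefers p z c.
Proof.
move=> ncz; rewrite /prefers -leqNgt leq_eqVlt orb_idl // => /eqP/val_inj/perm_inj.
by move/eqP; rewrite eq_sym (negbTE ncz).
Qed.

End Rankings.

Lemma sum_if_eq (R : nmodType) (T : finType) (A : pred T) (q : T) (v : R) :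
  \sum_(p | A p) (if p == q then v else 0) = if A q then v else 0.
Proof.
case: ifP => Aq; last first.
  by rewrite big1 // => p Ap; case: eqP => // pq; rewrite -pq Ap in Aq.
by rewrite (bigD1 q) //= eqxx big1 ?addr0 // => p /andP[_ /negbTE ->].
Qed.

Lemma sum_dist_le (R : realType) m (P Q : profile R m) e (A : pred {perm 'I_m}) :
  (forall p, `|P p - Q p| < e) ->
  `|\sum_(p | A p) P p - \sum_(p | A p) Q p| <= e * (m`!)%:R.
Proof.
move=> PQ; have e_ge0 : 0 <= e := ltW (le_lt_trans (normr_ge0 _) (PQ 1%g)).
rewrite -sumrB mulr_natr -card_Sn -sumr_const big_mkcond /=.
apply: le_trans (ler_norm_sum _ _ _) _; apply: ler_sum => p _.
by case: ifP => _; rewrite ?normr0 // ltW.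
Qed.

Section Counting.
Variable R : nmodType.

Lemma sum_const_relabel m (t : {perm 'I_m}) (u : R) (A B : pred {perm 'I_m}) :
  (forall p, A (t * p)%g = B p) -> \sum_(p | A p) u = \sum_(p | B p) u.
Proof. by move=> AB; rewrite (reindex_inj (mulgI t)); apply: eq_bigl. Qed.
Arguments sum_const_relabel {m} t {u A B}.

Lemma sum_by_top n (F : {perm 'I_n.+1} -> R) :
  \sum_(d : 'I_n.+1) \sum_(p : {perm 'I_n.+1} | nat_of_ord (p d) == 0%N) F p
  = \sum_p F p.
Proof.
under eq_bigr do rewrite big_mkcond.
rewrite exchange_big; apply: eq_bigr => p _ /=.
rewrite (bigD1 (p^-1 ord0)%g) //= permKV eqxx big1 ?addr0 // => d.
case: ifP => // /eqP pd0 /eqP[]; apply: (@perm_inj _ p).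
by rewrite permKV; apply: val_inj.
Qed.

Lemma sum_top_const n (u : R) (d : 'I_n.+1) :
  (\sum_(p : {perm 'I_n.+1} | nat_of_ord (p d) == 0%N) u) *+ n.+1
  = \sum_(p : {perm 'I_n.+1}) u.
Proof.
set top_d := \sum_(p : {perm 'I_n.+1} | nat_of_ord (p d) == 0%N) u.
rewrite -(sum_by_top (fun=> u)) [RHS](eq_bigr (fun=> top_d)).
  by rewrite [RHS]sumr_const card_ord.
move=> d' _; apply: (sum_const_relabel (tperm d' d)) => p.
by rewrite permM tpermL.
Qed.

Lemma sum_prefers_const m (u : R) (c z : 'I_m) : c != z ->
  (\sum_(p | prefers p c z) u) *+ 2 = \sum_(p : {perm 'I_m}) u.
Proof.
move=> ncz; rewrite mulr2n [RHS](bigID (fun p => prefers p c z)) /=; congr (_ + _).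
apply: (sum_const_relabel (tperm c z)) => p.
by rewrite negb_prefers // /prefers !permM tpermL tpermR.
Qed.

End Counting.

Section Plurality.
Variables (R : realType) (m : nat).
Implicit Types (P Q : profile R m) (c d w : 'I_m) (q : {perm 'I_m}).

Lemma plu_top_neq0 (i0 : 'I_m) P : plu_top P != set0.
Proof.
apply/set0Pn; exists [arg max_(i > i0) plu_score P i]%O; rewrite inE.
by apply/forallP => d; case: arg_maxP => // c _; apply.
Qed.

Lemma plu_top_max P c d : c \in plu_top P -> plu_score P d <= plu_score P c.
Proof. by rewrite inE => /forallP. Qed.

Lemma plurality_in_top (i0 : 'I_m) tb P :
  tiebreak_ok tb -> plurality tb P \in plu_top P.
Proof. by move=> tbP; apply/tbP/(plu_top_neq0 i0). Qed.

Lemma plurality_strict_winner tb P w : tiebreak_ok tb ->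
  (forall d, d != w -> plu_score P d < plu_score P w) -> plurality tb P = w.
Proof.
move=> tbP win; apply/eqP; apply: contraT => /win.
by rewrite ltNge plu_top_max // (plurality_in_top w).
Qed.

Lemma plu_score_le_manipulators P Q c w :
  (forall p, 0 <= Q p) -> total_weight Q = total_weight P ->
  c != w -> c \in plu_top Q ->
  (forall p, Q p < P p -> prefers p c w) ->
  plu_score P w <= \sum_(p | prefers p c w) P p.
Proof.
move=> Qge0 QP ncw cQ sincere.
have PleQ p : ~~ prefers p c w -> P p <= Q p.
  by rewrite leNgt; apply: contra; apply: sincere.
have scoreP_le : plu_score P w <= plu_score Q w.
  by apply: ler_sum => p /(not_prefers_top c)/PleQ.
have scoreQ_le : plu_score Q c <= \sum_(p | prefers p c w) Q p.
  rewrite /plu_score [leRHS]big_mkcond [leLHS]big_mkcond.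
  apply: ler_sum => p _; case: ifP => [/(prefers_top ncw) -> // | _].
  by case: ifP => // _; apply: Qge0.
have rest_le : \sum_(p | ~~ prefers p c w) P p <= \sum_(p | ~~ prefers p c w) Q p.
  by apply: ler_sum => p /PleQ.
have splitW (X : profile R m) : total_weight X =
    \sum_(p | prefers p c w) X p + \sum_(p | ~~ prefers p c w) X p.
  by rewrite /total_weight (bigID (fun p => prefers p c w)).
move: QP; rewrite !splitW; have := plu_top_max w cQ; lra.
Qed.

Lemma plu_score_unison_move P c w q d :
  plu_score (unison_move P c w q) d =
  \sum_(p : {perm 'I_m} | nat_of_ord (p d) == 0%N) (if prefers p c w then 0 else P p)
  + (if nat_of_ord (q d) == 0%N then \sum_(r | prefers r c w) P r else 0).
Proof.
rewrite /plu_score; under eq_bigr do rewrite ffunE.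
by rewrite big_split /= sum_if_eq.
Qed.

Lemma plu_score_unison_move_le P c w q d : (forall p, 0 <= P p) ->
  nat_of_ord (q d) != 0%N -> plu_score (unison_move P c w q) d <= plu_score P d.
Proof.
move=> Pge0 /negbTE qd; rewrite plu_score_unison_move qd addr0.
by apply: ler_sum => p _; case: ifP.
Qed.

Lemma plu_score_unison_move_target P c w q :
  plu_score (unison_move P c w q) w =
  plu_score P w + (if nat_of_ord (q w) == 0%N then \sum_(r | prefers r c w) P r else 0).
Proof.
rewrite plu_score_unison_move; congr (_ + _).
by apply: eq_bigr => p /(not_prefers_top c)/negbTE ->.
Qed.

Lemma plu_score_unison_move_beneficiary P c w q : c != w ->
  nat_of_ord (q c) == 0%N ->
  plu_score (unison_move P c w q) c = \sum_(r | prefers r c w) P r.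
Proof.
move=> ncw qc; rewrite plu_score_unison_move qc big1 ?add0r //.
by move=> p /(prefers_top ncw) ->.
Qed.

Lemma total_weight_unison_move P c w q :
  total_weight (unison_move P c w q) = total_weight P.
Proof.
rewrite /total_weight; under eq_bigr do rewrite ffunE.
rewrite big_split /= (sum_if_eq predT) /= (bigID (fun p => prefers p c w)) /=.
rewrite big1 ?add0r => [|p -> //]; rewrite [RHS](bigID (fun p => prefers p c w)) /=.
by rewrite addrC; congr (_ + _); apply: eq_bigr => p /negbTE ->.
Qed.

(* Rankings not preferring [c] to the winner keep or gain weight in the
   unison move. *)
Lemma UM_CM f P : is_profile P -> UM f P -> CM f P.
Proof.
case=> Pge0 Ppos [c [ncw [q fQ]]].
set Q := unison_move P c (f P) q.
have sum_ge0 : 0 <= \sum_(r | prefers r c (f P)) P r by apply: sumr_ge0.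
exists Q; split; rewrite ?fQ ?total_weight_unison_move //.
- split=> [p|]; rewrite ?total_weight_unison_move // ffunE.
  by apply: addr_ge0; case: ifP.
- move=> p; rewrite ffunE; case: ifP => // _; rewrite ltNge lerDl.
  by case: ifP; rewrite ?sum_ge0 ?lexx.
Qed.

End Plurality.

Section ExpectedProfile.
Variables (R : realType) (n : nat) (theta : R).
Local Notation E := (expected_profile n.+1 theta).
Local Notation u := ((1 - theta) / (n.+1`!)%:R).

Lemma sum_uniform : \sum_(p : {perm 'I_n.+1}) u = 1 - theta.
Proof.
rewrite sumr_const card_Sn -mulrnAr -[X in _ * X]mulr_natr mulVf ?mulr1 //.
by rewrite pnatr_eq0 -lt0n fact_gt0.
Qed.

Lemma sum_expected (A : pred {perm 'I_n.+1}) :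
  \sum_(p | A p) E p = (if A 1%g then theta else 0) + \sum_(p | A p) u.
Proof. by under eq_bigr do rewrite ffunE; rewrite big_split /= sum_if_eq. Qed.

Lemma expected_profile_ge0 p : 0 <= theta <= 1 -> 0 <= E p.
Proof.
case/andP=> th0 th1; rewrite ffunE addr_ge0 ?divr_ge0 ?subr_ge0 //.
by case: ifP.
Qed.

Lemma total_weight_expected : total_weight E = 1.
Proof. by rewrite /total_weight (sum_expected predT) sum_uniform addrC subrK. Qed.

Lemma plu_score_expected d :
  plu_score E d = (if d == ord0 then theta else 0) + (1 - theta) / n.+1%:R.
Proof.
rewrite /plu_score sum_expected perm1; congr (_ + _).
apply: (@mulIf _ n.+1%:R); first by rewrite pnatr_eq0.
by rewrite divfK ?pnatr_eq0 // mulr_natr sum_top_const sum_uniform.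
Qed.

Lemma sum_prefers_expected c z : c != z ->
  \sum_(p | prefers p c z) E p = (if (c < z)%N then theta else 0) + (1 - theta) / 2.
Proof.
move=> ncz; rewrite sum_expected /prefers !perm1; congr (_ + _).
apply: (@mulIf _ 2); first by rewrite pnatr_eq0.
by rewrite divfK ?pnatr_eq0 // mulr_natr sum_prefers_const // sum_uniform.
Qed.

End ExpectedProfile.

Lemma plurality_expected (R : realType) n (theta : R) tb : tiebreak_ok tb ->
  0 < theta -> plurality tb (expected_profile n.+1 theta) = ord0.
Proof.
move=> tbP th0; apply: plurality_strict_winner => // d /negbTE nd0.
by rewrite !plu_score_expected nd0 eqxx add0r ltrDr.
Qed.

Lemma plurality_UM_expected (R : realType) n (theta : R) tb :
  tiebreak_ok tb -> 0 < theta -> theta < (n.+2%:R - 2) / (3 * n.+2%:R - 2) ->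
  UM (plurality tb) (expected_profile n.+2 theta).
Proof.
set x : R := n.+2%:R => tbP th0 th_lt.
have x2 : 2 <= x by rewrite /x ler_nat.
rewrite ltr_pdivlMr in th_lt; last by lra.
have x_gt2 : 2 < x by nra.
have th1 : theta < 1 by nra.
set V := (1 - theta) / x.
have xV : V * x = 1 - theta by rewrite divfK // pnatr_eq0.
pose c1 : 'I_n.+2 := Ordinal (isT : (1 < n.+2)%N).
have nc10 : c1 != ord0 by [].
set q := tperm ord0 c1.
exists c1; rewrite plurality_expected //; split => //; exists q.
apply: plurality_strict_winner => // d ndc1.
rewrite plu_score_unison_move_beneficiary ?tpermR // sum_prefers_expected //= add0r.
have [->|nd0] := eqVneq d ord0.
  rewrite plu_score_unison_move_target tpermL /= addr0.
  by rewrite plu_score_expected eqxx -/x -/V; nra.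
apply: le_lt_trans (plu_score_unison_move_le _ _ _ _) _.
- by move=> p; apply: expected_profile_ge0; rewrite (ltW th0) (ltW th1).
- by rewrite /q tpermD // eq_sym.
rewrite plu_score_expected (negbTE nd0) add0r -/x -/V; nra.
Qed.

Lemma plurality_not_CM_near_expected (R : realType) n (theta : R) tb :
  tiebreak_ok tb -> theta <= 1 ->
  (n.+2%:R - 2) / (3 * n.+2%:R - 2) < theta ->
  exists2 eps : R, 0 < eps & forall P : profile R n.+2,
    (forall p, `|P p - expected_profile n.+2 theta p| < eps) ->
    ~ CM (plurality tb) P.
Proof.
set x : R := n.+2%:R => tbP th1 th_gt.
have x2 : 2 <= x by rewrite /x ler_nat.
rewrite ltr_pdivrMr in th_gt; last by lra.
set V := (1 - theta) / x.
have xV : V * x = 1 - theta by rewrite divfK // pnatr_eq0.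
have V_ge0 : 0 <= V by rewrite divr_ge0 ?subr_ge0 ?ler0n.
(* [g] is the margin by which the score of candidate 1 in the expected profile
   exceeds the weight preferring any other candidate to 1; perturbations
   moving each of these sums by at most [g / 3] cannot close it. *)
set g := theta + V - (1 - theta) / 2.
have gE : g = theta + V - (1 - theta) / 2 by [].
have gx : g * x = (theta * (3 * x - 2) - (x - 2)) / 2.
  by rewrite gE mulrBl mulrDl xV; field.
have g_gt0 : 0 < g.
  have : 0 < g * x by rewrite gx; lra.
  nra.
have g_le : g <= theta by nra.
have fact_gt0 : 0 < (n.+2`!)%:R :> R by rewrite ltr0n fact_gt0.
exists (g / 3 / (n.+2`!)%:R) => [|P PE]; first by rewrite !divr_gt0.
set E := expected_profile n.+2 theta in PE *.
have near (A : pred {perm 'I_n.+2}) :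
    `|\sum_(p | A p) P p - \sum_(p | A p) E p| <= g / 3.
  by apply: le_trans (sum_dist_le A PE) _; rewrite divfK ?gt_eqF.
have near_score d : `|plu_score P d - plu_score E d| <= g / 3 := near _.
have score0 : theta + V - g / 3 <= plu_score P ord0.
  by move: (near_score ord0); rewrite plu_score_expected eqxx ler_distl => /andP[].
have score_other d : d != ord0 -> plu_score P d <= V + g / 3.
  move=> /negbTE nd0; move: (near_score d).
  by rewrite plu_score_expected nd0 add0r ler_distl => /andP[].
have wP : plurality tb P = ord0.
  apply: plurality_strict_winner => // d /score_other; lra.
case=> Q [[Qge0 _] QP]; rewrite wP => ncw sincere.
have := plu_score_le_manipulators Qge0 QP ncw (plurality_in_top ord0 Q tbP) sincere.
move: (near (fun p => prefers p (plurality tb Q) ord0)).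
rewrite sum_prefers_expected //= add0r ler_distl => /andP[_]; lra.
Qed.

Theorem mainTheorem5 (R : realType) (m : nat) (theta : R)
  (tb : {set 'I_m} -> 'I_m) :
  (2 <= m)%N -> 0 < theta <= 1 -> tiebreak_ok tb ->
  [/\ nat_of_ord (plurality tb (expected_profile m theta)) = 0%N,
      theta < (m%:R - 2) / (3 * m%:R - 2) ->
        UM (plurality tb) (expected_profile m theta) /\
        CM (plurality tb) (expected_profile m theta) &
      (m%:R - 2) / (3 * m%:R - 2) < theta ->
        exists eps : R, 0 < eps /\
          forall P : profile R m, is_profile P -> total_weight P = 1 ->
            (forall p, `|P p - expected_profile m theta p| < eps) ->
            ~ CM (plurality tb) P].
Proof.
move: tb; case: m => [|[|n]] tb // _ /andP[th0 th1] tbP.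
have E_profile : is_profile (expected_profile n.+2 theta).
  split; last by rewrite total_weight_expected.
  by move=> p; apply: expected_profile_ge0; rewrite (ltW th0) th1.
split; first by rewrite plurality_expected.
  move=> th_lt; have UM_E := plurality_UM_expected tbP th0 th_lt.
  by split; last exact: UM_CM.
move=> th_gt.
have [eps eps_gt0 not_CM] := plurality_not_CM_near_expected tbP th1 th_gt.
by exists eps; split => // P _ _; apply: not_CM.
Qed.
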